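(* Consider a rooted search tree in which every internal node has exactly $b\ge 1$ children and every leaf is at depth $d$. For each internal node $S$ and each action $A$ available at $S$, let $P_{\textrm{best}}(A\mid S)\in[0,1]$ with $\sum_{A} P_{\textrm{best}}(A\mid S)=1$ over the $b$ actions at $S$; these values become known only when $S$ is explored. Let $P_{\textrm{uni}}=1/b$. Given a set $\mathcal{E}$ of explored internal nodes, define for each leaf $\hat S$ with root-to-leaf path $S_0\xrightarrow{A_0}S_1\xrightarrow{A_1}\cdots\xrightarrow{A_{d-1}}S_d=\hat S$ $$P_{\textrm{opt}}(\hat S)=\prod_{k:\,S_k\in\mathcal{E}} P_{\textrm{best}}(A_k\mid S_k)\cdot\prod_{k:\,S_k\notin\mathcal{E},\,0\le k\le d-1} P_{\textrm{uni}} .$$ Suppose initially no node is explored, and run the greedy procedure: starting at the root, explore the current state $S$ and move along an action $A$ maximizing $P_{\textrm{best}}(A\mid S)$, repeating until a leaf is reached. Then the greedy procedure explores at most $d$ nodes, and the leaf it reaches maximizes $P_{\textrm{opt}}(\hat S)$ over all leaves $\hat S$, where $P_{\textrm{opt}}$ is computed with $\mathcal{E}$ equal to the set of nodes explored by the greedy procedure.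
   Context: A search problem is modelled as a tree whose nodes are states and edges are actions; each root-to-leaf path (leaf) is a candidate solution. $P_{\textrm{best}}(A\mid S)$ is the probability that the optimal candidate solution in the subtree rooted at $S$ lies in the subtree reached by taking action $A$ from $S$. The standing modelling assumptions are: in unexplored parts of the tree the action probabilities are taken to be uniform, equal to $P_{\textrm{uni}}=1/b$; the depth $d$ of the tree is uniform and known; the branching factor $b$ is constant and known. $P_{\textrm{opt}}(\hat S)$ is the (estimated) probability that candidate solution $\hat S$ is the optimal one. *)

From mathcomp Require Import all_boot all_order all_algebra.
Set Implicit Arguments. Unset Strict Implicit. Unset Printing Implicit Defensive.
Import Order.TTheory GRing.Theory Num.Theory.
Local Open Scope ring_scope.

(* Nodes of the uniform tree with branching factor b are identified with the
   sequence of actions (elements of 'I_b) leading to them from the root.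
   Internal nodes: sequences of size < d; leaves: sequences of size d. *)

Section Search.
Variables (R : realFieldType) (b : nat).

Definition Puni : R := (b%:R)^-1.

Fixpoint Popt_from (Pbest : seq 'I_b -> 'I_b -> R) (E : seq (seq 'I_b))
    (S : seq 'I_b) (l : seq 'I_b) : R :=
  match l with
  | [::] => 1
  | a :: l' => (if S \in E then Pbest S a else Puni) *
               Popt_from Pbest E (rcons S a) l'
  end.

Definition Popt Pbest E (l : seq 'I_b) : R := Popt_from Pbest E [::] l.

Fixpoint greedy (choose : seq 'I_b -> 'I_b) (n : nat) (S : seq 'I_b)
    : seq (seq 'I_b) * seq 'I_b :=
  match n with
  | 0 => ([::], S)
  | n'.+1 => let r := greedy choose n' (rcons S (choose S)) in (S :: r.1, r.2)
  end.

End Search.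

From mathcomp Require Import all_boot all_order all_algebra.
Set Implicit Arguments. Unset Strict Implicit. Unset Printing Implicit Defensive.
Import Order.TTheory GRing.Theory Num.Theory.
Local Open Scope ring_scope.

(* The greedy run explores exactly the nodes of its own path, so every node
   off that path still gets P_uni.  At an explored node the chosen action has
   the largest weight, which is at least the average 1/b of weights summing to
   1.  Hence, by induction on the remaining depth, a leaf that leaves the
   greedy path at node S scores at most P_best(A|S) P_uni^k, while the greedy
   leaf scores at least P_best(choose S|S) P_uni^k. *)

Lemma Puni_ge0 (R : realFieldType) (b : nat) : 0 <= Puni R b.
Proof. by rewrite /Puni invr_ge0 ler0n. Qed.

Lemma Puni_le_max (R : realFieldType) (b : nat) (w : 'I_b -> R) (a : 'I_b) :
  \sum_(A < b) w A = 1 -> (forall A, w A <= w a) -> Puni R b <= w a.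
Proof.
move=> sum1 wa_max; have b_gt0 : (0 < b)%N := leq_ltn_trans (leq0n a) (ltn_ord a).
rewrite /Puni -div1r ler_pdivrMr ?ltr0n // -[X in X <= _]sum1.
apply: (@le_trans _ _ (\sum_(A < b) w a)); first exact: ler_sum.
by rewrite sumr_const card_ord mulr_natr.
Qed.

Lemma rcons_nonprefix (T : eqType) (s : seq T) x : ~~ prefix (rcons s x) s.
Proof.
rewrite prefixE size_rcons take_oversize //.
by apply/eqP => /(congr1 size); rewrite size_rcons; apply: n_Sn.
Qed.

Section GreedyRun.
Variables (b : nat) (choose : seq 'I_b -> 'I_b).

Fixpoint greedy_path (n : nat) (S : seq 'I_b) : seq 'I_b :=
  if n is n'.+1 then choose S :: greedy_path n' (rcons S (choose S)) else [::].

Lemma greedy_leaf n S : (greedy choose n S).2 = S ++ greedy_path n S.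
Proof. by elim: n S => [|n IHn] S /=; rewrite ?cats0 // IHn cat_rcons. Qed.

Lemma size_greedy_path n S : size (greedy_path n S) = n.
Proof. by elim: n S => [|n IHn] S //=; rewrite IHn. Qed.

Lemma size_greedy_explored n S : size (greedy choose n S).1 = n.
Proof. by elim: n S => [|n IHn] S //=; rewrite IHn. Qed.

Lemma greedy_explored_prefix n S : all (prefix S) (greedy choose n S).1.
Proof.
elim: n S => [|n IHn] S //=; rewrite prefix_refl /=.
by apply: sub_all (IHn _) => x; apply: prefix_trans (prefix_rcons _ _).
Qed.

Lemma greedy_explored_off_path n S a : a != choose S ->
  ~~ has (prefix (rcons S a)) (greedy choose n (rcons S (choose S))).1.
Proof.
move=> a_off; apply/hasPn => x /(allP (greedy_explored_prefix _ _)).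
rewrite !prefixE !size_rcons => /eqP ->.
by rewrite eqseq_rcons eqxx eq_sym.
Qed.

End GreedyRun.

Section PoptExplored.
Variables (R : realFieldType) (b : nat) (Pbest : seq 'I_b -> 'I_b -> R).

Lemma Popt_from_unexplored E S l :
  ~~ has (prefix S) E -> Popt_from Pbest E S l = Puni R b ^+ size l.
Proof.
elim: l S => [|a l IHl] S noS //=.
have /negbTE -> : S \notin E.
  by apply: contra noS => SE; apply/hasP; exists S; rewrite ?prefix_refl.
rewrite IHl ?exprS //; apply: contra noS => /hasP[x xE Sa_x].
by apply/hasP; exists x; rewrite // (prefix_trans (prefix_rcons S a)).
Qed.

Lemma Popt_from_cons_nonprefix E x S l :
  ~~ prefix S x -> Popt_from Pbest (x :: E) S l = Popt_from Pbest E S l.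
Proof.
elim: l S => [|a l IHl] S S_x //=.
have /negbTE S_neq_x : S != x by apply: contraNneq S_x => ->; apply: prefix_refl.
rewrite inE S_neq_x IHl //; apply: contra S_x; exact: prefix_trans (prefix_rcons S a).
Qed.

End PoptExplored.

Section GreedyOptimal.
Variables (R : realFieldType) (b d : nat) (Pbest : seq 'I_b -> 'I_b -> R).
Variable choose : seq 'I_b -> 'I_b.
Hypothesis Pbest_ge0 : forall S A, (size S < d)%N -> 0 <= Pbest S A.
Hypothesis Pbest_sum1 : forall S, (size S < d)%N -> \sum_(A < b) Pbest S A = 1.
Hypothesis choose_max :
  forall S A, (size S < d)%N -> Pbest S A <= Pbest S (choose S).

Lemma Popt_greedy_cons n S a l :
  Popt_from Pbest (greedy choose n.+1 S).1 S (a :: l) =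
  Pbest S a * Popt_from Pbest (greedy choose n (rcons S (choose S))).1 (rcons S a) l.
Proof. by rewrite /= mem_head Popt_from_cons_nonprefix ?rcons_nonprefix. Qed.

Lemma Popt_greedy_path_ge n S : (size S + n <= d)%N ->
  Puni R b ^+ n <=
  Popt_from Pbest (greedy choose n S).1 S (greedy_path choose n S).
Proof.
elim: n S => [|n IHn] S Sn_le_d; first by rewrite expr0.
have S_lt_d : (size S < d)%N by rewrite (leq_trans _ Sn_le_d) // addnS ltnS leq_addr.
rewrite [greedy_path _ _ _]/= Popt_greedy_cons exprS.
apply: ler_pM; rewrite ?exprn_ge0 ?Puni_ge0 //.
  by apply: Puni_le_max => [|A]; [exact: Pbest_sum1 | exact: choose_max].
by apply: IHn; rewrite size_rcons addSnnS.
Qed.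

Lemma Popt_greedy_path_max n S l : (size S + n <= d)%N -> size l = n ->
  Popt_from Pbest (greedy choose n S).1 S l <=
  Popt_from Pbest (greedy choose n S).1 S (greedy_path choose n S).
Proof.
elim: n S l => [|n IHn] S [|a l] // Sn_le_d [size_l].
have S_lt_d : (size S < d)%N by rewrite (leq_trans _ Sn_le_d) // addnS ltnS leq_addr.
have Sc_le_d : (size (rcons S (choose S)) + n <= d)%N by rewrite size_rcons addSnnS.
rewrite [greedy_path _ _ _]/= !Popt_greedy_cons.
have [-> | a_off] := eqVneq a (choose S).
  by apply: ler_wpM2l; [exact: Pbest_ge0 | exact: IHn].
rewrite Popt_from_unexplored ?greedy_explored_off_path // size_l.
apply: ler_pM; rewrite ?exprn_ge0 ?Puni_ge0 ?Pbest_ge0 ?choose_max //.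
exact: Popt_greedy_path_ge.
Qed.

End GreedyOptimal.

Theorem theorem1 (R : realFieldType) (b d : nat) (hb : (1 <= b)%N)
  (Pbest : seq 'I_b -> 'I_b -> R)
  (Pbest_ge0 : forall S A, (size S < d)%N -> 0 <= Pbest S A)
  (Pbest_sum1 : forall S, (size S < d)%N -> \sum_(A < b) Pbest S A = 1)
  (choose : seq 'I_b -> 'I_b)
  (choose_max : forall S A, (size S < d)%N -> Pbest S A <= Pbest S (choose S)) :
  let E := (greedy choose d [::]).1 in
  let leaf := (greedy choose d [::]).2 in
  (size (undup E) <= d)%N /\ size leaf = d /\
  forall l : seq 'I_b, size l = d -> Popt Pbest E l <= Popt Pbest E leaf.
Proof.
move=> E leaf; split; first by rewrite (leq_trans (size_undup _)) ?size_greedy_explored.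
rewrite /leaf greedy_leaf /= size_greedy_path; split=> // l size_l.
by apply: (Popt_greedy_path_max Pbest_ge0 Pbest_sum1 choose_max _ size_l).
Qed.
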